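(* Let $f:\mathbb{R}^n\to\mathbb{R}\cup\{+\infty\}$ have a nonempty convex domain and let $S:\mathbb{R}^n\to\mathbb{R}\cup\{+\infty\}$ be even. If $f$ is directionally $S$-smooth, then for all $x_0,x_1\in\mathrm{dom}\,f$ and all $y_0\in\partial f(x_0)$, $y_1\in\partial f(x_1)$, \[ S^*(y_1-y_0)\le S(x_1-x_0). \]
   Context: $f$ is directionally $S$-smooth if $f((1-t)x_0+tx_1)+t(1-t)S(x_1-x_0)\ge(1-t)f(x_0)+tf(x_1)$ for all $t\in(0,1)$ and all $x_0,x_1\in\mathbb{R}^n$ with $(1-t)x_0+tx_1\in\mathrm{dom} f$. The subdifferential $\partial f(x)$ is the set of $a\in\mathbb{R}^n$ with $f(y)\ge f(x)+\langle a,y-x\rangle$ for all $y\in\mathbb{R}^n$ (possibly empty, $f$ not assumed convex). $S^*(v)=\sup_{u\in\mathbb{R}^n}\{\langle u,v\rangle-S(u)\}$. *)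

From HB Require Import structures.
From mathcomp Require Import all_boot all_order all_algebra.
From mathcomp Require Import all_classical all_reals ereal.
Set Implicit Arguments. Unset Strict Implicit. Unset Printing Implicit Defensive.
Import Order.TTheory GRing.Theory Num.Theory.
Local Open Scope ring_scope.
Local Open Scope classical_set_scope.

Definition dotv {R : realType} {n : nat} (u v : 'rV[R]_n) : R :=
  \sum_(i < n) u ord0 i * v ord0 i.

(* f : R^n -> R ∪ {+oo} *)
Definition no_minus_infty {R : realType} {n : nat} (f : 'rV[R]_n -> \bar R) :=
  forall x, f x != -oo%E.

Definition dom {R : realType} {n : nat} (f : 'rV[R]_n -> \bar R) : set 'rV[R]_n :=
  [set x | (f x < +oo)%E].

Definition convex_set {R : realType} {n : nat} (A : set 'rV[R]_n) :=
  forall x y t, A x -> A y -> 0 <= t <= 1 -> A ((1 - t) *: x + t *: y).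

Definition even_fun {R : realType} {n : nat} (S : 'rV[R]_n -> \bar R) :=
  forall u, S (- u) = S u.

Definition dir_smooth {R : realType} {n : nat} (S f : 'rV[R]_n -> \bar R) :=
  forall (t : R) (x0 x1 : 'rV[R]_n), 0 < t < 1 ->
    dom f ((1 - t) *: x0 + t *: x1) ->
    ((1 - t)%:E * f x0 + t%:E * f x1 <=
     f ((1 - t) *: x0 + t *: x1)%R + (t * (1 - t))%:E * S (x1 - x0)%R)%E.

Definition subdiff {R : realType} {n : nat} (f : 'rV[R]_n -> \bar R) (x : 'rV[R]_n)
  : set 'rV[R]_n :=
  [set a | forall y, (f x + (dotv a (y - x)%R)%:E <= f y)%E].

Definition conj_fun {R : realType} {n : nat} (S : 'rV[R]_n -> \bar R) (v : 'rV[R]_n)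
  : \bar R :=
  ereal_sup [set ((dotv u v)%:E - S u)%E | u in [set: 'rV[R]_n]].

(** Fix u and write v := x1 - x0.  Apply directional smoothness twice: at x1
    along -u and at x0 along v, with step parameter t, and bound the four values
    of f at the endpoints from below by the subgradient inequalities at x0 and
    x1.  The values of f cancel in the sum, leaving
    (1 - t) (<y1 - y0, u> - S u - S v) <= t <y1 - y0, v>  for every t in (0, 1);
    letting t -> 0 gives <y1 - y0, u> - S u <= S v, and the supremum over u is
    S^*(y1 - y0). *)
From HB Require Import structures.
From mathcomp Require Import all_boot all_order all_algebra.
From mathcomp Require Import all_classical all_reals ereal.
From mathcomp Require Import ring lra.
Import Order.TTheory GRing.Theory Num.Theory.
Local Open Scope ring_scope.
Local Open Scope classical_set_scope.

Section DotProduct.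
Context {R : realType} {n : nat}.
Implicit Types (a b c : 'rV[R]_n) (k : R).

Lemma dotvC a b : dotv a b = dotv b a.
Proof. by apply: eq_bigr => i _; rewrite mulrC. Qed.

Lemma dotvZr a k b : dotv a (k *: b) = k * dotv a b.
Proof. rewrite /dotv mulr_sumr; apply: eq_bigr => i _; rewrite mxE; ring. Qed.

Lemma dotvNr a b : dotv a (- b) = - dotv a b.
Proof. rewrite /dotv -sumrN; apply: eq_bigr => i _; rewrite mxE; ring. Qed.

Lemma dotvBr a b c : dotv a (b - c) = dotv a b - dotv a c.
Proof. rewrite /dotv -sumrB; apply: eq_bigr => i _; rewrite !mxE; ring. Qed.

Lemma dotvBl a b c : dotv (a - b) c = dotv a c - dotv b c.
Proof. rewrite /dotv -sumrB; apply: eq_bigr => i _; rewrite !mxE; ring. Qed.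

End DotProduct.

Lemma le0_of_interp_le {R : realFieldType} (c e : R) :
  (forall t, 0 < t < 1 -> (1 - t) * c <= t * e) -> c <= 0.
Proof.
move=> interp_le; rewrite leNgt; apply/negP => c_gt0.
have ce_gt0 : 0 < c + `|e| by have := normr_ge0 e; lra.
pose t := c / (2 * (c + `|e|)).
have t_gt0 : 0 < t by rewrite divr_gt0 // mulr_gt0.
have tE : t * (2 * (c + `|e|)) = c by rewrite mulfVK // gt_eqF // mulr_gt0.
have t_lt1 : t < 1 by have := normr_ge0 e; nra.
have := interp_le t (ltac:(by apply/andP)).
have : t * e <= t * `|e| by rewrite ler_pM2l // ler_norm.
nra.
Qed.

Lemma dom_finite {R : realType} {n : nat} {f : 'rV[R]_n -> \bar R} {x} :
  no_minus_infty f -> dom f x -> exists a : R, f x = a%:E.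
Proof.
move=> f_fin; rewrite /dom /=.
by case: (f x) (f_fin x) => [a| |] // _ _; exists a.
Qed.

Lemma subdiff_lower_bound {R : realType} {n : nat} {f : 'rV[R]_n -> \bar R} {x b c} :
  subdiff f x b -> f x = c%:E -> forall y, ((c + dotv b (y - x))%:E <= f y)%E.
Proof. by move=> b_sub fx y; rewrite EFinD -fx; exact: b_sub. Qed.

Section DirectionalSmoothness.
Context {R : realType} {n : nat} {f S : 'rV[R]_n -> \bar R}.
Hypothesis f_smooth : dir_smooth S f.

Lemma dir_smooth_le {t : R} {x w} {a s} l0 l1 :
  0 < t < 1 -> f x = a%:E -> S w = s%:E ->
  (l0%:E <= f (x - t *: w))%E -> (l1%:E <= f (x + (1 - t) *: w))%E ->
  (1 - t) * l0 + t * l1 <= a + t * (1 - t) * s.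
Proof.
move=> t01 fx Sw l0_le l1_le; have /andP[t_gt0 t_lt1] := t01.
have mid : (1 - t) *: (x - t *: w) + t *: (x + (1 - t) *: w) = x.
  by apply/rowP => i; rewrite !mxE; ring.
have dir : (x + (1 - t) *: w) - (x - t *: w) = w.
  by apply/rowP => i; rewrite !mxE; ring.
have x_dom : dom f ((1 - t) *: (x - t *: w) + t *: (x + (1 - t) *: w)).
  by rewrite mid /dom /= fx ltry.
have := f_smooth _ _ _ t01 x_dom; rewrite mid dir fx Sw -lee_fin.
apply: le_trans; rewrite EFinD !EFinM.
by apply: leeD; rewrite lee_pmul2l // lte_fin subr_gt0.
Qed.

Context {x0 x1 y0 y1 u : 'rV[R]_n} {a0 a1 su sv : R}.
Hypotheses (fx0 : f x0 = a0%:E) (fx1 : f x1 = a1%:E).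
Hypotheses (y0_sub : subdiff f x0 y0) (y1_sub : subdiff f x1 y1).
Hypotheses (S_even : even_fun S) (Su : S u = su%:E) (Sv : S (x1 - x0) = sv%:E).

Lemma dir_smooth_subdiff_interp t : 0 < t < 1 ->
  (1 - t) * (dotv u (y1 - y0) - su - sv) <= t * dotv (x1 - x0) (y1 - y0).
Proof.
move=> t01; have /andP[t_gt0 t_lt1] := t01.
set v := x1 - x0.
have lb0 := subdiff_lower_bound y0_sub fx0.
have lb1 := subdiff_lower_bound y1_sub fx1.
have along_u : (1 - t) * (a1 + t * dotv y1 u)
    + t * (a0 + dotv y0 v - (1 - t) * dotv y0 u) <= a1 + t * (1 - t) * su.
  apply: (dir_smooth_le _ _ t01 fx1 (w := - u)); first by rewrite S_even.
    have -> : x1 - t *: - u = x1 + t *: u by rewrite scalerN opprK.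
    by have := lb1 (x1 + t *: u); rewrite addrAC subrr add0r dotvZr.
  have shift : x1 + (1 - t) *: - u - x0 = v - (1 - t) *: u.
    by apply/rowP => i; rewrite !mxE; ring.
  by have := lb0 (x1 + (1 - t) *: - u); rewrite shift dotvBr dotvZr addrA.
have along_v : (1 - t) * (a0 - t * dotv y0 v) + t * (a1 - t * dotv y1 v)
    <= a0 + t * (1 - t) * sv.
  apply: (dir_smooth_le _ _ t01 fx0 Sv).
    by have := lb0 (x0 - t *: v); rewrite addrAC subrr add0r dotvNr dotvZr.
  have -> : x0 + (1 - t) *: v = x1 - t *: v.
    by apply/rowP => i; rewrite !mxE; ring.
  by have := lb1 (x1 - t *: v); rewrite addrAC subrr add0r dotvNr dotvZr.
rewrite dotvC (dotvC v) !dotvBl.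
have : t * ((1 - t) * (dotv y1 u - dotv y0 u - su - sv)
    - t * (dotv y1 v - dotv y0 v)) <= 0 by nra.
by rewrite pmulr_rle0 //; lra.
Qed.

End DirectionalSmoothness.

Theorem proposition2p12 (R : realType) (n : nat) (f S : 'rV[R]_n -> \bar R) :
  no_minus_infty f -> dom f !=set0 -> convex_set (dom f) ->
  no_minus_infty S -> even_fun S ->
  dir_smooth S f ->
  forall x0 x1 y0 y1 : 'rV[R]_n,
    dom f x0 -> dom f x1 -> subdiff f x0 y0 -> subdiff f x1 y1 ->
    (conj_fun S (y1 - y0)%R <= S (x1 - x0)%R)%E.
Proof.
move=> f_fin _ _ S_fin S_even f_smooth x0 x1 y0 y1 x0_dom x1_dom y0_sub y1_sub.
apply: ge_ereal_sup => _ [u _ <-].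
case Su: (S u) => [su| |];
  [| by rewrite addeNy leNye | by have := S_fin u; rewrite Su].
case Sv: (S (x1 - x0)) => [sv| |];
  [| by rewrite leey | by have := S_fin (x1 - x0); rewrite Sv].
have [a0 fx0] := dom_finite f_fin x0_dom.
have [a1 fx1] := dom_finite f_fin x1_dom.
rewrite -EFinD lee_fin.
suff : dotv u (y1 - y0) - su - sv <= 0 by lra.
apply: le0_of_interp_le => t.
exact: (dir_smooth_subdiff_interp f_smooth fx0 fx1 y0_sub y1_sub S_even Su Sv).
Qed.
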